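(* Let $r\geq 2$ and $0<a<\frac{1}{r(r+1)}$. Let $X$ be a finite set of cardinality $n$ and let $A_1,\dots,A_{r+1}\subseteq X$ satisfy $$\sum_{i=1}^{r+1}|A_i|\geq\left(r-\frac1r-(r+1)a\right)n.$$ Then there exist $1\leq k<l\leq r+1$ with $$|A_k\cap A_l|\geq\left(\frac{r-2}{r}+\frac{2}{r^{2}(r+1)}-\frac{2(r-1)}{r}a\right)n.$$ *)

From mathcomp Require Import all_boot all_order all_algebra.

From mathcomp Require Import all_boot all_order all_algebra.
From mathcomp Require Import ring lra.
Import Order.TTheory GRing.Theory Num.Theory.
Local Open Scope ring_scope.

(** Double counting over the points: if [d x] is the number of sets containing
    [x], then [sum_k |A_k| = sum_x d x] and [sum_(k <> l) |A_k :&: A_l| =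
    sum_x (d x^2 - d x)].  Since [d x] is an integer and [d^2 - d] is convex,
    [d^2 - d] lies above its chord between [r - 1] and [r], so the size bound
    on [sum_k |A_k|] bounds the sum over the [r (r + 1)] ordered pairs from
    below by [r (r + 1)] times the claimed value; some pair is at least the
    average. *)

Definition degree {I T : finType} (A : I -> {set T}) (x : T) : nat :=
  #|[set i | x \in A i]|.

Lemma card_sum_mem (T : finType) (B : {set T}) : #|B| = (\sum_x (x \in B))%N.
Proof.
by rewrite -sum1_card big_mkcond /=; apply: eq_bigr => x _; case: (x \in B).
Qed.

Section DoubleCounting.

Variables (I T : finType) (A : I -> {set T}).

Lemma degreeE (x : T) : degree A x = (\sum_i (x \in A i))%N.
Proof. by rewrite /degree card_sum_mem; apply: eq_bigr => i _; rewrite inE. Qed.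

Lemma sum_card_degree : (\sum_i #|A i|)%N = (\sum_x degree A x)%N.
Proof.
under eq_bigr do rewrite card_sum_mem.
by rewrite exchange_big; apply: eq_bigr => x _; rewrite degreeE.
Qed.

Lemma sum_card_setI_degree :
  (\sum_k \sum_l #|A k :&: A l|)%N = (\sum_x degree A x ^ 2)%N.
Proof.
under eq_bigr do under eq_bigr do rewrite card_sum_mem.
under eq_bigr do rewrite exchange_big /=.
rewrite exchange_big; apply: eq_bigr => x _.
rewrite degreeE expnS expn1 big_distrlr /=.
by apply: eq_bigr => k _; apply: eq_bigr => l _; rewrite inE mulnb.
Qed.

Lemma sum_card_setI_offdiag (R : pzRingType) :
  \sum_k \sum_(l | l != k) (#|A k :&: A l|%:R : R)
  = \sum_x ((degree A x)%:R ^+ 2 - (degree A x)%:R).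
Proof.
have offdiag k : \sum_(l | l != k) (#|A k :&: A l|%:R : R)
                 = \sum_l #|A k :&: A l|%:R - #|A k|%:R.
  by rewrite [in RHS](bigD1 k) //= setIid addrC addrK.
under eq_bigr do rewrite offdiag.
rewrite sumrB [RHS]sumrB; congr (_ - _); last by rewrite -!natr_sum sum_card_degree.
under eq_bigr do rewrite -natr_sum.
rewrite -natr_sum sum_card_setI_degree natr_sum.
by under eq_bigr do rewrite natrX.
Qed.

End DoubleCounting.

Lemma chord_le_sqr_subr (R : realDomainType) (d r : nat) :
  r%:R * (r%:R - 1) + 2 * (r%:R - 1) * (d%:R - r%:R) <= (d%:R : R) ^+ 2 - d%:R.
Proof.
have [d_lt_r | r_le_d] := ltnP d r.
- have : (d%:R : R) + 1 <= r%:R by rewrite natr1 ler_nat.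
  nra.
- have : (r%:R : R) <= d%:R by rewrite ler_nat.
  nra.
Qed.

Lemma exists_pair_ge_average (R : realDomainType) (m : nat)
    (F : 'I_m -> 'I_m -> R) (t : R) :
  (1 < m)%N -> (forall k l, F k l = F l k) ->
  (m * m.-1)%:R * t <= \sum_k \sum_(l | l != k) F k l ->
  exists k l : 'I_m, (k < l)%N /\ t <= F k l.
Proof.
move=> m_gt1 F_sym avg.
have [|small] := boolP [exists k : 'I_m, exists l : 'I_m, (k < l)%N && (t <= F k l)].
  by case/existsP=> k /existsP [l /andP [kl tF]]; exists k, l.
have lt_offdiag k l : l != k -> F k l < t.
  have lt_ord (k' l' : 'I_m) : (k' < l')%N -> F k' l' < t.
    move=> kl; rewrite ltNge; apply: contraNN small => tF.
    by apply/existsP; exists k'; apply/existsP; exists l'; rewrite kl.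
  by rewrite neq_ltn => /orP [/lt_ord | /lt_ord]; rewrite // F_sym.
have ord_neq k : exists l : 'I_m, l != k.
  have [-> | k_neq0] := eqVneq k (Ordinal (ltnW m_gt1)).
    by exists (Ordinal m_gt1); rewrite -val_eqE.
  by exists (Ordinal (ltnW m_gt1)); rewrite eq_sym.
suff : \sum_k \sum_(l | l != k) F k l < (m * m.-1)%:R * t by rewrite ltNge avg.
have sum_ord (c : R) : \sum_(k : 'I_m) c = m%:R * c.
  by rewrite sumr_const card_ord mulr_natl.
have sum_neq (k : 'I_m) (c : R) : \sum_(l | l != k) c = m.-1%:R * c.
  by rewrite sumr_const cardC1 card_ord mulr_natl.
rewrite natrM -mulrA -sum_ord.
apply: ltr_sum => [|k _]; first by apply/hasP; exists (Ordinal (ltnW m_gt1)).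
have [l lk] := ord_neq k.
rewrite -(sum_neq k); apply: ltr_sum => [|l' l'k]; first by apply/hasP; exists l.
exact: lt_offdiag.
Qed.

Theorem lemma4 (R : realFieldType) (r : nat) (a : R) (T : finType)
    (A : 'I_r.+1 -> {set T}) :
  (2 <= r)%N -> 0 < a -> a < 1 / (r%:R * (r%:R + 1)) ->
  \sum_(i < r.+1) (#|A i|)%:R >= (r%:R - 1 / r%:R - (r%:R + 1) * a) * (#|T|)%:R ->
  exists k l : 'I_r.+1, (k < l)%N /\
    (#|A k :&: A l|)%:R >=
      ((r%:R - 2) / r%:R + 2 / (r%:R ^+ 2 * (r%:R + 1))
       - 2 * (r%:R - 1) / r%:R * a) * (#|T|)%:R.
Proof.
move=> r_ge2 _ _ sum_ge.
have r1_gt1 : (1 < r.+1)%N by rewrite ltnS ltnW.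
apply: exists_pair_ge_average r1_gt1 _ _ => [k l|]; first by rewrite setIC.
rewrite sum_card_setI_offdiag.
set n : R := #|T|%:R; set S := \sum_i (#|A i|%:R : R).
have chord_sum : r%:R * (r%:R - 1) * n + 2 * (r%:R - 1) * (S - r%:R * n)
                 <= \sum_x ((degree A x)%:R ^+ 2 - (degree A x)%:R).
  rewrite /S -natr_sum sum_card_degree natr_sum.
  rewrite [leLHS](_ : _ = \sum_x (r%:R * (r%:R - 1)
                              + 2 * (r%:R - 1) * ((degree A x)%:R - r%:R))).
    by apply: ler_sum => x _; apply: chord_le_sqr_subr.
  by rewrite big_split /= sumr_const -mulr_sumr sumrB sumr_const /n !mulr_natr.
apply: le_trans chord_sum.
have r_ge2R : (2 : R) <= r%:R by rewrite (ler_nat R 2 r).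
have r_neq0 : (r%:R : R) != 0 by rewrite gt_eqF //; lra.
have r1_neq0 : (r%:R : R) + 1 != 0 by rewrite gt_eqF //; lra.
have -> : ((r.+1 * r.+1.-1)%:R : R) = (r%:R + 1) * r%:R by rewrite natrM natr1.
(* The target is exactly the chord bound evaluated at the assumed lower bound on [S]. *)
have -> : (r%:R + 1) * r%:R * (((r%:R - 2) / r%:R + 2 / (r%:R ^+ 2 * (r%:R + 1))
       - 2 * (r%:R - 1) / r%:R * a) * n)
    = r%:R * (r%:R - 1) * n
      + 2 * (r%:R - 1) * ((r%:R - 1 / r%:R - (r%:R + 1) * a) * n - r%:R * n).
  by field; rewrite r_neq0 r1_neq0.
rewrite lerD2l; apply: ler_wpM2l; [lra | by rewrite lerD2r].
Qed.
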